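(* Let $\mathbf{A}$ be an $n\times n$ skew-symmetric matrix over a field $K$ and $\mathbf{v}\in K^n$. Then the set system $([n],\mathcal{B})$ with $\mathcal{B}=\{I\subseteq[n]:(\mathbf{A}+\mathbf{v}\mathbf{v}^T)[I]\text{ is nonsingular}\}$ is a strong $\Delta$-matroid.
   Context: A matrix is skew-symmetric if $\mathbf{A}_{ij}=-\mathbf{A}_{ji}$ and $\mathbf{A}_{ii}=0$. $\mathbf{M}[I]$ is the principal submatrix indexed by $I$; the empty matrix is nonsingular. A $\Delta$-matroid is a pair $(E,\mathcal{B})$ with $\mathcal{B}$ a nonempty family of subsets of the finite set $E$ such that for all $B,B'\in\mathcal{B}$ and $x\in B\triangle B'$ there is $y\in B\triangle B'$ with $B\triangle\{x,y\}\in\mathcal{B}$. It is strong if for all $B,B'\in\mathcal{B}$ and $x\in B\triangle B'$ there is $y\in B\triangle B'$ with both $B\triangle\{x,y\}\in\mathcal{B}$ and $B'\triangle\{x,y\}\in\mathcal{B}$. *)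

From mathcomp Require Import all_boot all_order all_algebra.
Set Implicit Arguments. Unset Strict Implicit. Unset Printing Implicit Defensive.
Import GRing.Theory.
Local Open Scope ring_scope.

Definition skew_symmetric (K : fieldType) (n : nat) (A : 'M[K]_n) : Prop :=
  (forall i j, A i j = - A j i) /\ (forall i, A i i = 0).

Definition principal_submx (K : fieldType) (n : nat) (M : 'M[K]_n)
  (I : {set 'I_n}) : 'M[K]_#|I| :=
  \matrix_(i < #|I|, j < #|I|) M (enum_val i) (enum_val j).

(* Nonsingular: nonzero determinant (the empty matrix has det 1). *)
Definition nonsingular (K : fieldType) (m : nat) (M : 'M[K]_m) : bool :=
  \det M != 0.

Definition symdiff (T : finType) (A B : {set T}) : {set T} := (A :\: B) :|: (B :\: A).
Notation "A :^: B" := (symdiff A B) (at level 52, left associativity) : set_scope.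

Definition delta_matroid (E : finType) (B : {set {set E}}) : Prop :=
  B != set0 /\
  forall B1 B2, B1 \in B -> B2 \in B -> forall x, x \in B1 :^: B2 ->
    exists2 y, y \in B1 :^: B2 & B1 :^: [set x; y] \in B.

Definition strong_delta_matroid (E : finType) (B : {set {set E}}) : Prop :=
  B != set0 /\
  forall B1 B2, B1 \in B -> B2 \in B -> forall x, x \in B1 :^: B2 ->
    exists2 y, y \in B1 :^: B2 &
      (B1 :^: [set x; y] \in B) /\ (B2 :^: [set x; y] \in B).

From mathcomp Require Import all_boot all_order all_algebra perm.
From mathcomp Require Import ring.
Import GRing.Theory.
Local Open Scope ring_scope.
Set Implicit Arguments. Unset Strict Implicit. Unset Printing Implicit Defensive.

(* Call [M] skew-plus-rank-one if [M - w w^T] is skew-symmetric for some [w];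
   [A + v v^T] is.  For such [M], [det M[{x}] = w_x^2] and
   [det M[{x,y}] = (M - w w^T)_xy^2].  If [M[X]] is nonsingular, the principal
   pivot [P = (with_cols M X)^-1 with_cols M (~: X)] satisfies
   [with_cols M X * with_cols P Z = with_cols M (X :^: Z)], so the nonsingular
   principal submatrices of [P] are those of [M] translated by [X], and [P] is
   again skew-plus-rank-one, say [P - u u^T = T].  Given bases [X], [Y] and [x]
   in [Z = X :^: Y], pivot [P] once more on [Z] to get [Q] (skew part [T'],
   vector [u']); it remains to find [y] in [Z] with [P[{x,y}]] and [Q[{x,y}]]
   nonsingular.  Since [Q[Z] = P[Z]^-1], a rank-one computation gives
   [T[Z] T'[Z] = 1 - k u u'^T] on [Z] with [k^2 = k], whose [(x,x)] entry
   [\sum_y T_xy T'_yx = 1 - k u_x u'_x] yields either a [y] with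
   [T_xy T'_yx <> 0] or [u_x u'_x <> 0], in which case [y = x] works. *)

Section SymmetricDifference.
Variable T : finType.
Implicit Types A B C : {set T}.

Lemma in_symdiff A B x : (x \in symdiff A B) = (x \in A) (+) (x \in B).
Proof. by rewrite !inE; case: (x \in A); case: (x \in B). Qed.

Lemma symdiffA A B C : symdiff A (symdiff B C) = symdiff (symdiff A B) C.
Proof.
by apply/setP => x; rewrite !in_symdiff; case: (x \in A); case: (x \in B); case: (x \in C).
Qed.

Lemma symdiffKA A B : symdiff A (symdiff A B) = B.
Proof. by apply/setP => x; rewrite !in_symdiff; case: (x \in A); case: (x \in B). Qed.

End SymmetricDifference.

Section SelectionMatrices.
Variables (K : fieldType) (n : nat).
Implicit Types (I J : {set 'I_n}) (M N B : 'M[K]_n).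

Definition sel_mx I : 'M[K]_n := diag_mx (\row_i (i \in I)%:R).

Lemma sel_mxE I i j : sel_mx I i j = ((i \in I) && (i == j))%:R.
Proof. by rewrite !mxE; case: (i \in I); case: (i == j). Qed.

Lemma tr_sel_mx I : (sel_mx I)^T = sel_mx I.
Proof. exact: tr_diag_mx. Qed.

Lemma mul_sel_mx I J : sel_mx I *m sel_mx J = sel_mx (I :&: J).
Proof.
by apply/matrixP => i j; rewrite mul_diag_mx !mxE mulrnAr -natrM mulnb inE.
Qed.

Lemma mul_sel_mx_id I : sel_mx I *m sel_mx I = sel_mx I.
Proof. by rewrite mul_sel_mx setIid. Qed.

Lemma mul_sel_mxCr I : sel_mx I *m sel_mx (~: I) = 0.
Proof.
by rewrite mul_sel_mx setICr; apply/matrixP => i j; rewrite sel_mxE inE mxE.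
Qed.

Lemma mul_sel_mxCl I : sel_mx (~: I) *m sel_mx I = 0.
Proof. by rewrite -{2}[I]setCK mul_sel_mxCr. Qed.

Lemma add_sel_mxCr I : sel_mx I + sel_mx (~: I) = 1%:M.
Proof.
apply/matrixP => i j; rewrite !mxE inE.
by case: (i \in I); case: (i == j); rewrite ?addr0 ?add0r.
Qed.

Lemma mul_sel_mx_mxE m I (A : 'M[K]_(n, m)) i j :
  (sel_mx I *m A) i j = (i \in I)%:R * A i j.
Proof. by rewrite mul_diag_mx !mxE. Qed.

Lemma mul_mx_sel_mxE m I (A : 'M[K]_(m, n)) i j :
  (A *m sel_mx I) i j = A i j * (j \in I)%:R.
Proof. by rewrite mul_mx_diag !mxE. Qed.

(* Encodes principal minors without reindexing [I] by ordinals: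
   [\det (with_cols M I) = \det M[I]]. *)
Definition with_cols M I : 'M[K]_n :=
  \matrix_(i, j) if j \in I then M i j else (i == j)%:R.

Lemma with_colsE M I : with_cols M I = M *m sel_mx I + sel_mx (~: I).
Proof.
apply/matrixP => i j; rewrite mul_mx_diag !mxE inE.
case: (eqVneq i j) => [<-|_]; [case: (i \in I) | case: (j \in I)];
  by rewrite /= ?mulr1 ?mulr0 ?mulr1n ?mulr0n ?addr0 ?add0r.
Qed.

Lemma with_colsT M : with_cols M setT = M.
Proof. by apply/matrixP => i j; rewrite mxE inE. Qed.

Lemma with_cols0 M : with_cols M set0 = 1%:M.
Proof. by apply/matrixP => i j; rewrite !mxE inE. Qed.

Lemma mul_with_cols B N I i j :
  (B *m with_cols N I) i j = if j \in I then (B *m N) i j else B i j.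
Proof.
rewrite !mxE; case: ifP => jI; first by apply: eq_bigr => k _; rewrite mxE jI.
rewrite (bigD1 j) //= big1 => [|k kj]; first by rewrite mxE jI eqxx mulr1 addr0.
by rewrite mxE jI (negPf kj) mulr0.
Qed.

End SelectionMatrices.

Arguments sel_mx {K n} I.

Section PrincipalMinors.
Variable K : fieldType.

Lemma det_mxsub_perm n (s : 'S_n) (M : 'M[K]_n) : \det (mxsub s s M) = \det M.
Proof.
have -> : mxsub s s M = row_perm s (col_perm s M) by apply/matrixP => i j; rewrite !mxE.
by rewrite row_permE col_permE !det_mulmx !det_perm odd_permV mulrCA -expr2 sqrr_sign mulr1.
Qed.

Lemma det_with_cols_lift n (M : 'M[K]_n.+1) (I : {set 'I_n.+1}) j : j \notin I ->
  \det (with_cols M I) = \det (with_cols (row' j (col' j M)) [set i | lift j i \in I]).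
Proof.
move=> jNI; rewrite (expand_det_col _ j) (bigD1 j) //= big1 => [|i ij]; last first.
  by rewrite mxE (negPf jNI) (negPf ij) mul0r.
rewrite mxE (negPf jNI) eqxx mul1r addr0 /cofactor -signr_odd addnn odd_double mul1r.
by congr (\det _); apply/matrixP => k l; rewrite !mxE inE (inj_eq lift_inj).
Qed.

Lemma det_mxsub_with_cols n m (f : 'I_m -> 'I_n) (M : 'M[K]_n) : injective f ->
  \det (mxsub f f M) = \det (with_cols M [set f a | a : 'I_m]).
Proof.
elim: n M m f => [|n IHn] M m f f_inj.
  by case: m f f_inj => [|m] f; [rewrite !det_mx00 | case: (f ord0)].
case: (pickP [pred j | j \notin [set f a | a : 'I_m]]) => [j /= jNf | f_onto].
  have f_lift a : {b | f a = lift j b}.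
    have /unlift_some[b fab _] : j != f a by apply: contraNneq jNf => ->; apply: imset_f.
    by exists b.
  pose g a := sval (f_lift a); have fg a : f a = lift j (g a) := svalP (f_lift a).
  have g_inj : injective g by move=> a b gab; apply: f_inj; rewrite !fg gab.
  have -> : mxsub f f M = mxsub g g (row' j (col' j M)).
    by apply/matrixP => a b; rewrite !mxE !fg.
  rewrite IHn // (det_with_cols_lift _ jNf); congr (\det (with_cols _ _)).
  apply/setP => i; rewrite inE; apply/imsetP/imsetP => -[a _ e]; exists a => //.
    by rewrite e fg.
  by apply: (@lift_inj n.+1 j); rewrite -fg.
have fT : [set f a | a : 'I_m] = setT.
  by apply/setP => j; rewrite inE; apply/negbFE/f_onto.
have m_eq : m = n.+1.
  by rewrite -[m]card_ord -(card_imset _ f_inj) fT cardsT card_ord.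
subst m; pose s := perm f_inj.
have -> : mxsub f f M = mxsub s s M by apply/matrixP => a b; rewrite !mxE !permE.
by rewrite det_mxsub_perm fT with_colsT.
Qed.

Lemma det_principal_submx n (M : 'M[K]_n) (I : {set 'I_n}) :
  \det (principal_submx M I) = \det (with_cols M I).
Proof.
rewrite [principal_submx M I]/(mxsub enum_val enum_val M).
rewrite det_mxsub_with_cols; last exact: enum_val_inj.
congr (\det (with_cols M _)); apply/setP => x.
apply/imsetP/idP => [[a _ ->]|xI]; first exact: enum_valP.
by exists (enum_rank_in xI x); rewrite ?enum_rankK_in.
Qed.

Lemma det_with_cols1 n (M : 'M[K]_n) x : \det (with_cols M [set x]) = M x x.
Proof.
have -> : [set x] = [set x | _ : 'I_1].
  by apply/setP => y; rewrite inE; apply/eqP/imsetP => [->|[a _ ->]] //; exists ord0.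
by rewrite -det_mxsub_with_cols ?det_mx11 ?mxE // => a b _; rewrite !ord1.
Qed.

Lemma det_with_cols2 n (M : 'M[K]_n) x y : x != y ->
  \det (with_cols M [set x; y]) = M x x * M y y - M x y * M y x.
Proof.
move=> xy; pose f (a : 'I_2) := if val a == 0%N then x else y.
have f_inj : injective f.
  move=> [[|[|a]] ?] [[|[|b]] ?] //; rewrite /f /= => e; try exact: val_inj;
    by rewrite e eqxx in xy.
have -> : [set x; y] = [set f a | a : 'I_2].
  apply/setP => z; rewrite !inE; apply/orP/imsetP => [[]/eqP->|[[[|[|a]] ?] _ ->]] //.
  - by exists ord0.
  - by exists (lift ord0 ord0).
  - by left.
  - by right.
rewrite -det_mxsub_with_cols // (expand_det_row _ ord0) !big_ord_recl big_ord0.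
by rewrite /cofactor !det_mx11 !mxE /= expr0 expr1 addr0 !mul1r mulN1r mulrN.
Qed.

End PrincipalMinors.

Section SkewSymmetric.
Variable K : fieldType.

Lemma trmx11 (a : 'M[K]_1) : a^T = a.
Proof. by rewrite [a]mx11_scalar tr_scalar_mx. Qed.

Lemma outer_mxE n (a b : 'cV[K]_n) i j : (a *m b^T) i j = a i 0 * b j 0.
Proof. by rewrite mxE big_ord1 !mxE. Qed.

Lemma skew_symmetricP n (S : 'M[K]_n) : skew_symmetric S <-> S^T = - S /\ forall i, S i i = 0.
Proof.
split=> -[skS S0]; split=> //.
  by apply/matrixP => i j; rewrite !mxE skS.
by move=> i j; have /matrixP/(_ j i) := skS; rewrite !mxE.
Qed.

Lemma skew_symmetricD n (S T : 'M[K]_n) :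
  skew_symmetric S -> skew_symmetric T -> skew_symmetric (S + T).
Proof.
move=> [skS S0] [skT T0]; split=> [i j|i]; rewrite !mxE; last by rewrite S0 T0 addr0.
by rewrite (skS i j) (skT i j) opprD.
Qed.

Lemma skew_symmetric_subtr n (B : 'M[K]_n) : skew_symmetric (B - B^T).
Proof. by split=> [i j|i]; rewrite !mxE ?opprB // subrr. Qed.

(* Write [S = U - U^T] with [U] strictly upper triangular; unlike [S^T = - S]
   alone, this also works in characteristic 2. *)
Lemma qform_skew n (S : 'M[K]_n) (c : 'cV[K]_n) : skew_symmetric S -> c^T *m S *m c = 0.
Proof.
move=> [skS S0]; pose U := \matrix_(i, j) if (i < j)%N then S i j else 0.
have -> : S = U - U^T.
  apply/matrixP => i j; rewrite !mxE.
  case: (ltngtP i j) => [_|_|/val_inj ->]; rewrite ?subr0 ?sub0r ?subrr;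
    [by [] | exact: skS | exact: S0].
by rewrite mulmxBr mulmxBl -[c^T *m U^T *m c]trmx11 !trmx_mul !trmxK mulmxA subrr.
Qed.

Lemma skew_symmetric_cong n m (S : 'M[K]_n) (J : 'M[K]_(n, m)) :
  skew_symmetric S -> skew_symmetric (J^T *m S *m J).
Proof.
move=> skS; have /skew_symmetricP[ST _] := skS; apply/skew_symmetricP; split=> [|i].
  by rewrite !trmx_mul trmxK ST mulNmx mulmxN mulmxA.
have : (col i J)^T *m S *m col i J = 0 by exact: qform_skew.
rewrite tr_col colE !mulmxA -!row_mul -colE => /matrixP/(_ 0 0).
by rewrite !mxE.
Qed.

End SkewSymmetric.

Section Pivot.
Variables (K : fieldType) (n : nat).
Implicit Types (M N : 'M[K]_n) (w : 'cV[K]_n) (X Z : {set 'I_n}).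

Definition pivot M X := invmx (with_cols M X) *m with_cols M (~: X).

Lemma mul_with_cols_pivot M X : with_cols M X \in unitmx ->
  with_cols M X *m pivot M X = with_cols M (~: X).
Proof. by move=> MX; rewrite mulmxA mulmxV ?mul1mx. Qed.

Lemma with_cols_pivot M X Z : with_cols M X \in unitmx ->
  with_cols M X *m with_cols (pivot M X) Z = with_cols M (symdiff X Z).
Proof.
move=> MX; apply/matrixP => i j.
rewrite mul_with_cols mul_with_cols_pivot // !mxE in_symdiff inE.
by case: (j \in X); case: (j \in Z).
Qed.

Lemma skew_rank1_pivot N w X :
  skew_symmetric (N - w *m w^T) -> with_cols N X \in unitmx ->
  exists2 u, skew_symmetric (pivot N X - u *m u^T) &
    sel_mx X *m u = sel_mx X *m (pivot N X)^T *m sel_mx X *m w.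
Proof.
move=> skN NX; have := mul_with_cols_pivot NX.
rewrite !with_colsE setCK mulmxDl.
set P := pivot N X; set D := sel_mx X; set E := sel_mx (~: X) => NP.
have [DD EE] : D *m D = D /\ E *m E = E by split; apply: mul_sel_mx_id.
have [DE ED] : D *m E = 0 /\ E *m D = 0 by split; [apply: mul_sel_mxCr | apply: mul_sel_mxCl].
have DE1 : D + E = 1%:M by apply: add_sel_mxCr.
have DT : D^T = D by apply: tr_sel_mx.
(* The congruence [J] carries the quadratic form of [N] to that of [P], up to
   the alternating form of [D *m P]. *)
set J := D *m P - E.
have JT : J^T = P^T *m D - E by rewrite /J linearB /= trmx_mul DT tr_sel_mx.
have NJ : N *m J = D - E *m P.
  rewrite mulmxBr mulmxA -[N *m D *m P](addrK (E *m P)) NP.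
  by rewrite addrAC [N *m E + D]addrC addrK.
have JNJ : J^T *m N *m J = P^T *m D + E *m P.
  rewrite -mulmxA NJ JT mulmxBr !mulmxBl -!mulmxA DD ED (mulmxA D) DE mul0mx mulmx0.
  by rewrite mulmxA EE subr0 sub0r opprK.
clearbody P D E J; exists (J^T *m w); last by rewrite JT mulmxA mulmxBr DE subr0 !mulmxA.
have -> : P - J^T *m w *m (J^T *m w)^T =
    (D *m P - (D *m P)^T) + J^T *m (N - w *m w^T) *m J.
  rewrite mulmxBr mulmxBl JNJ !trmx_mul trmxK DT !mulmxA !addrA subrK.
  by rewrite -mulmxDl DE1 mul1mx.
exact/skew_symmetricD/skew_symmetric_cong/skN/skew_symmetric_subtr.
Qed.

End Pivot.

Section SkewRankOne.
Variables (K : fieldType) (n : nat) (N : 'M[K]_n) (w : 'cV[K]_n).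
Hypothesis skN : skew_symmetric (N - w *m w^T).

Lemma skew_rank1E i j : (N - w *m w^T) i j = N i j - w i 0 * w j 0.
Proof. by rewrite !mxE big_ord1 !mxE. Qed.

Lemma skew_rank1_diag x : N x x = w x 0 ^+ 2.
Proof. by apply/eqP; rewrite -subr_eq0 expr2 -skew_rank1E skN.2. Qed.

Lemma det_with_cols1_skew_rank1 x : \det (with_cols N [set x]) = w x 0 ^+ 2.
Proof. by rewrite det_with_cols1 skew_rank1_diag. Qed.

Lemma det_with_cols2_skew_rank1 x y : x != y ->
  \det (with_cols N [set x; y]) = (N - w *m w^T) x y ^+ 2.
Proof.
move=> xy; rewrite det_with_cols2 // !skew_rank1_diag.
have -> : N y x = w y 0 * w x 0 - (N - w *m w^T) x y.
  by rewrite skN.1 opprK skew_rank1E addrC subrK.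
rewrite -[N x y](subrK (w x 0 * w y 0)) -skew_rank1E.
by set s := (N - _) x y; ring.
Qed.

End SkewRankOne.

Section Exchange.
Variables (K : fieldType) (n : nat) (N P : 'M[K]_n) (w u : 'cV[K]_n).
Variable Z : {set 'I_n}.
Hypotheses (skN : skew_symmetric (N - w *m w^T)) (skP : skew_symmetric (P - u *m u^T)).
Hypothesis NP : with_cols N Z *m P = with_cols N (~: Z).
Hypothesis uE : sel_mx Z *m u = sel_mx Z *m P^T *m sel_mx Z *m w.

(* [D *m M *m D] is [M[Z]] padded with zeros; [NP] makes [D *m P *m D] the
   inverse of [D *m N *m D] on [Z]. *)
Local Notation D := (@sel_mx K n Z).
Let wZ := D *m w.
Let uZ := D *m u.
Let k := (wZ^T *m uZ) 0 0.

Lemma restrict_inverse : D *m N *m D *m (D *m P *m D) = D.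
Proof.
have := congr1 (fun M => D *m M *m D) NP; rewrite !with_colsE setCK /=.
rewrite mulmxDl !mulmxDr !mulmxDl !mulmxA mul_sel_mxCr !mul0mx addr0.
rewrite -(mulmxA _ (sel_mx (~: Z))) mul_sel_mxCl mulmx0 add0r !mul_sel_mx_id.
by rewrite -(mulmxA (D *m N) D D) mul_sel_mx_id.
Qed.

Lemma wZ_tr : wZ^T = w^T *m D.
Proof. by rewrite trmx_mul tr_sel_mx. Qed.

Lemma restrict_tr_wZ : (D *m P *m D)^T *m wZ = uZ.
Proof. by rewrite !trmx_mul !tr_sel_mx !mulmxA -(mulmxA _ D D) mul_sel_mx_id -uE. Qed.

Lemma wZ_uZ : wZ^T *m uZ = k%:M.
Proof. exact: mx11_scalar. Qed.

Lemma uZ_wZ : uZ^T *m wZ = k%:M.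
Proof. by rewrite -wZ_uZ -[LHS]trmx11 trmx_mul trmxK. Qed.

Lemma wZ_u : wZ^T *m u = k%:M.
Proof. by rewrite -wZ_uZ wZ_tr /uZ mulmxA -(mulmxA _ D D) mul_sel_mx_id. Qed.

Lemma sel_mx_wZ : D *m wZ = wZ.
Proof. by rewrite /wZ mulmxA mul_sel_mx_id. Qed.

Lemma wZ_sel_mx : wZ^T *m D = wZ^T.
Proof. by rewrite -[D in LHS]tr_sel_mx -trmx_mul sel_mx_wZ. Qed.

Lemma k_idem : k * k = k.
Proof.
have PwZ : wZ^T *m P *m wZ = k%:M.
  rewrite -uZ_wZ -restrict_tr_wZ [(_ *m wZ)^T]trmx_mul trmxK !mulmxA wZ_sel_mx.
  by rewrite -(mulmxA _ D D) mul_sel_mx_id.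
have := qform_skew wZ skP; rewrite mulmxBr mulmxBl PwZ (mulmxA wZ^T u).
rewrite -(mulmxA (wZ^T *m u) u^T wZ).
rewrite -[u^T *m wZ]trmx11 [(u^T *m wZ)^T]trmx_mul trmxK wZ_u -scalar_mxM => /eqP.
by rewrite subr_eq0 => /eqP/matrixP/(_ 0 0); rewrite !mxE eqxx !mulr1n.
Qed.

Lemma restrict_P_wZ : D *m P *m D *m wZ = (2 * k - 1) *: uZ.
Proof.
have /skew_symmetricP[+ _] := skP; rewrite linearB /= trmx_mul trmxK opprB.
move=> /eqP; rewrite subr_eq => /eqP PT.
have DUD : D *m (u *m u^T) *m D *m wZ = k *: uZ.
  rewrite -mulmxA sel_mx_wZ (mulmxA D) -mulmxA -[u^T *m wZ]trmx11.
  by rewrite [(u^T *m wZ)^T]trmx_mul trmxK wZ_u mul_mx_scalar.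
have := restrict_tr_wZ; rewrite !trmx_mul tr_sel_mx PT (mulmxA D).
rewrite !(mulmxDr, mulmxN) !(mulmxDl, mulNmx) DUD => E.
have solve (a b : K) : k * a - b + k * a = a -> b = (2 * k - 1) * a.
  move=> h; have -> : b = k * a - (k * a - b + k * a) + k * a by ring.
  by rewrite h; ring.
apply/matrixP => i j; rewrite [in RHS]mxE; apply: solve.
by move/matrixP/(_ i j): E; rewrite !mxE.
Qed.

Lemma restrict_N_uZ : D *m N *m D *m uZ = (2 * k - 1) *: wZ.
Proof.
have sq : (2 * k - 1) * (2 * k - 1) = 1.
  rewrite (_ : _ * _ = 4 * (k * k - k) + 1); last by ring.
  by rewrite k_idem subrr mulr0 add0r.
have := congr1 (mulmx (D *m N *m D)) restrict_P_wZ.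
rewrite mulmxA restrict_inverse sel_mx_wZ -scalemxAr => E.
by rewrite -[LHS]scale1r -{1}sq -scalerA -E.
Qed.

Lemma restrict_skew_mul :
  D *m (N - w *m w^T) *m D *m (D *m (P - u *m u^T) *m D) = D - k *: (wZ *m uZ^T).
Proof.
have restrictB (M : 'M[K]_n) (v : 'cV[K]_n) :
    D *m (M - v *m v^T) *m D = D *m M *m D - (D *m v) *m (D *m v)^T.
  by rewrite mulmxBr mulmxBl trmx_mul tr_sel_mx !mulmxA.
have wZ_P : wZ^T *m (D *m P *m D) = uZ^T.
  by rewrite -[wZ^T *m _]trmxK trmx_mul trmxK restrict_tr_wZ.
rewrite !restrictB -/wZ -/uZ mulmxBr !mulmxBl restrict_inverse.
rewrite (mulmxA _ uZ) restrict_N_uZ -(mulmxA wZ) wZ_P (mulmxA _ uZ).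
rewrite -(mulmxA wZ) wZ_uZ mul_mx_scalar -!scalemxAl.
by move: (wZ *m uZ^T) => W; apply/matrixP => i j; rewrite !mxE; ring.
Qed.

Lemma pivot_exchange x : x \in Z -> exists2 y, y \in Z &
  \det (with_cols N [set x; y]) != 0 /\ \det (with_cols P [set x; y]) != 0.
Proof.
move=> xZ; set S := N - w *m w^T; set T := P - u *m u^T.
have trace_x : \sum_y (D *m S *m D) x y * (D *m T *m D) y x = 1 - k * (w x 0 * u x 0).
  have /matrixP/(_ x x) := restrict_skew_mul; rewrite mxE => ->.
  rewrite mxE [X in _ + X]mxE [X in _ - X]mxE outer_mxE !mul_sel_mx_mxE.
  by rewrite sel_mxE xZ eqxx !mul1r.
case: (eqVneq (1 - k * (w x 0 * u x 0)) 0) => [kwu1 | nz].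
  have : k * (w x 0 * u x 0) != 0.
    by move/eqP: kwu1; rewrite subr_eq0 => /eqP <-; rewrite oner_eq0.
  rewrite !mulf_eq0 !negb_or => /andP[_ /andP[wx ux]].
  exists x => //; rewrite setUid.
  by rewrite (det_with_cols1_skew_rank1 skN) (det_with_cols1_skew_rank1 skP) !expf_neq0.
have /existsP[y] : [exists y, (D *m S *m D) x y * (D *m T *m D) y x != 0].
  apply: contraNT nz => /existsPn F0; rewrite -trace_x; apply/eqP/big1 => y _.
  exact/eqP/negbNE/F0.
rewrite !mul_mx_sel_mxE !mul_sel_mx_mxE xZ.
have [yZ|_] := boolP (y \in Z); last by rewrite !mulr0 mul0r eqxx.
rewrite !mul1r !mulr1 mulf_eq0 negb_or => /andP[Sxy Tyx].
have xy : x != y by apply: contraNneq Sxy => <-; exact/eqP/(skN.2 x).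
exists y => //; rewrite (det_with_cols2_skew_rank1 skN) // (det_with_cols2_skew_rank1 skP) //.
by rewrite !expf_neq0 // skP.1 oppr_eq0.
Qed.

End Exchange.

Unset Implicit Arguments.

Theorem proposition2p28 (K : fieldType) (n : nat) (A : 'M[K]_n) (v : 'cV[K]_n) :
  skew_symmetric A ->
  strong_delta_matroid
    [set I : {set 'I_n} | nonsingular (principal_submx (A + v *m v^T) I)].
Proof.
move=> skA; set M := A + v *m v^T.
have skM : skew_symmetric (M - v *m v^T) by rewrite /M addrK.
have inB I : (I \in [set I | nonsingular (principal_submx M I)]) = (\det (with_cols M I) != 0).
  by rewrite inE /nonsingular det_principal_submx.
split=> [|X Y]; first by apply/set0Pn; exists set0; rewrite inB with_cols0 det1 oner_eq0.
rewrite !inB => MX MY x xXY; set Z := symdiff X Y.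
have unitX : with_cols M X \in unitmx by rewrite unitmxE unitfE.
have [u skP _] := skew_rank1_pivot skM unitX; set P := pivot M X in skP.
have MXP I : with_cols M X *m with_cols P I = with_cols M (symdiff X I).
  exact: with_cols_pivot.
have unitZ : with_cols P Z \in unitmx.
  rewrite unitmxE unitfE; apply: contraNneq MY.
  by rewrite -(symdiffKA X Y) -MXP det_mulmx => ->; rewrite mulr0.
have [w skQ uE] := skew_rank1_pivot skP unitZ.
have [y yZ [Pxy Qxy]] := pivot_exchange skP skQ (mul_with_cols_pivot unitZ) uE xXY.
exists y => //; rewrite !inB -MXP det_mulmx mulf_neq0 //; split=> //.
rewrite -(symdiffKA X Y) -symdiffA -MXP -with_cols_pivot //.
by rewrite !det_mulmx !mulf_neq0 // -unitfE -unitmxE.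
Qed.
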